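(* For every $n\ge 1$, every labeled and every unlabeled tabletop rearrangement instance with $n$ objects has $\mathrm{MRB}\le n-1$; and for every $n\ge1$ there exists an instance whose $n$ objects are congruent convex objects (thin rectangles) such that its unlabeled $\mathrm{MRB}$, as well as its labeled $\mathrm{MRB}$ under any assignment of labels, equals $n-1$.
   Context: A tabletop rearrangement instance consists of $n$ objects (generalized cylinders of equal height; only planar footprints matter) in a bounded planar workspace, a feasible start arrangement and a feasible goal arrangement of poses in $SE(2)$; an arrangement is feasible if no two placed footprints overlap (have intersecting interiors). In the labeled setting each object $o_i$ must end at its own goal pose $x_i^g$; in the unlabeled setting objects are congruent and interchangeable and must end occupying all goal poses. A plan with external buffers is a sequence of pick-and-place operations in which each object is picked from its start pose exactly once and either placed directly at a goal pose (its own goal in the labeled setting, any unoccupied goal pose in the unlabeled setting), or placed into an external buffer (outside the workspace, unlimited capacity) and later moved from the buffer to such a goal pose; an object may be placed at a goal pose only if it does not overlap any object currently in the workspace; at the end every object is at a goal pose as required. The number of running buffers at a moment is the number of objects stored in buffers; $\mathrm{MRB}$ is the minimum over plans of the maximum number of running buffers during the plan. *)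

From HB Require Import structures.
From mathcomp Require Import all_boot all_order all_algebra.
From mathcomp Require Import fingroup perm.
From mathcomp Require Import boolp classical_sets reals topology normedtype trigo.
Set Implicit Arguments. Unset Strict Implicit. Unset Printing Implicit Defensive.
Import Order.TTheory GRing.Theory Num.Theory.
Import numFieldNormedType.Exports.
Local Open Scope ring_scope.
Local Open Scope classical_set_scope.

Section Rearr.
Variable R : realType.

Record pose := Pose { theta : R; tx : R; ty : R }.

Definition act (p : pose) (v : R * R) : R * R :=
  (cos (theta p) * v.1 - sin (theta p) * v.2 + tx p,
   sin (theta p) * v.1 + cos (theta p) * v.2 + ty p).

Definition place (F : set (R * R)) (p : pose) : set (R * R) := act p @` F.

Definition overlap (A B : set (R * R)) : Prop :=
  exists x, interior A x /\ interior B x.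

Definition bounded_ws (W : set (R * R)) : Prop :=
  exists M : R, forall v, W v -> `|v.1| <= M /\ `|v.2| <= M.

Definition feasible n (W : set (R * R)) (fp : 'I_n -> set (R * R))
  (x : 'I_n -> pose) : Prop :=
  (forall i, place (fp i) (x i) `<=` W) /\
  (forall i j, i != j -> ~ overlap (place (fp i) (x i)) (place (fp j) (x j))).

Definition labeled_instance n (W : set (R * R)) (fp : 'I_n -> set (R * R))
  (xs xg : 'I_n -> pose) : Prop :=
  bounded_ws W /\ feasible W fp xs /\ feasible W fp xg.

Definition unlabeled_instance n (W : set (R * R)) (F : set (R * R))
  (xs xg : 'I_n -> pose) : Prop :=
  bounded_ws W /\ feasible W (fun _ => F) xs /\ feasible W (fun _ => F) xg.

Inductive loc n := AtStart | InBuf | AtGoal of 'I_n.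
Arguments AtStart {n}. Arguments InBuf {n}.

Definition isbuf n (l : loc n) : bool := if l is InBuf then true else false.

(** Pick-and-place actions: [ToBuf i] picks object i from its start pose and
    puts it into the external buffer; [Place i j] picks object i (from its
    start pose or from the buffer) and places it at goal pose number j. *)
Inductive action n := ToBuf of 'I_n | Place of 'I_n & 'I_n.

Definition state n := 'I_n -> loc n.

Definition nbuf n (s : state n) : nat := #|[pred i | isbuf (s i)]|.

Definition upd n (s : state n) (i : 'I_n) (l : loc n) : state n :=
  fun k => if k == i then l else s k.

(** [allowed i j]: object i may be placed at goal j (labeled: j = its own goal;
    unlabeled: any goal). *)
Definition valid_step n (fp : 'I_n -> set (R * R)) (xs xg : 'I_n -> pose)
  (allowed : 'I_n -> 'I_n -> bool) (s : state n) (a : action n) : Prop :=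
  match a with
  | ToBuf i => s i = AtStart
  | Place i j =>
      (s i = AtStart \/ s i = InBuf) /\ allowed i j /\
      (forall k, s k <> AtGoal j) /\
      (forall k, k != i -> s k = AtStart ->
         ~ overlap (place (fp i) (xg j)) (place (fp k) (xs k))) /\
      (forall k j', k != i -> s k = AtGoal j' ->
         ~ overlap (place (fp i) (xg j)) (place (fp k) (xg j')))
  end.

Definition next n (s : state n) (a : action n) : state n :=
  match a with
  | ToBuf i => upd s i InBuf
  | Place i j => upd s i (AtGoal j)
  end.

Fixpoint exec n (fp : 'I_n -> set (R * R)) (xs xg : 'I_n -> pose)
  (allowed : 'I_n -> 'I_n -> bool) (s : state n) (p : seq (action n)) (k : nat)
  : Prop :=
  match p with
  | [::] => (forall i, exists j, s i = AtGoal j) /\ (nbuf s <= k)%N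
  | a :: p' => (nbuf s <= k)%N /\ valid_step fp xs xg allowed s a /\
               exec fp xs xg allowed (next s a) p' k
  end.

Definition init_state n : state n := fun _ => AtStart.

Definition labeled_MRB_le n (fp : 'I_n -> set (R * R)) (xs xg : 'I_n -> pose)
  (k : nat) : Prop :=
  exists p, exec fp xs xg (fun i j => j == i) (@init_state n) p k.

Definition unlabeled_MRB_le n (F : set (R * R)) (xs xg : 'I_n -> pose)
  (k : nat) : Prop :=
  exists p, exec (fun _ => F) xs xg (fun _ _ => true) (@init_state n) p k.

Definition labeled_MRB_eq n fp (xs xg : 'I_n -> pose) (k : nat) : Prop :=
  labeled_MRB_le fp xs xg k /\
  forall k', labeled_MRB_le fp xs xg k' -> (k <= k')%N.

Definition unlabeled_MRB_eq n F (xs xg : 'I_n -> pose) (k : nat) : Prop :=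
  unlabeled_MRB_le F xs xg k /\
  forall k', unlabeled_MRB_le F xs xg k' -> (k <= k')%N.

Definition rect (a b : R) : set (R * R) :=
  [set v | `|v.1| <= a / 2 /\ `|v.2| <= b / 2].

End Rearr.

From HB Require Import structures.
From mathcomp Require Import all_boot all_order all_algebra.
From mathcomp Require Import fingroup perm.
From mathcomp Require Import boolp classical_sets reals topology normedtype trigo.
From mathcomp Require Import lra.
Import Order.TTheory GRing.Theory Num.Theory.
Import numFieldNormedType.Exports.
Local Open Scope ring_scope.
Local Open Scope classical_set_scope.
Set Implicit Arguments. Unset Strict Implicit. Unset Printing Implicit Defensive.

(* Upper bound: leave one object m at its start pose and move the other n - 1
   objects to the buffer.  Then m can go to its goal, since no other object is
   left in the workspace, and the buffered objects follow one by one, because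
   the goal arrangement is feasible.
   Lower bound: take n horizontal strips stacked on top of each other, whose
   goal poses are vertical strips side by side, so that every goal pose meets
   every start pose.  When the first object is placed at a goal, every other
   object has left its start pose and none is at a goal yet, so n - 1 objects
   are in the buffer. *)

Lemma card_predC1_ord n (i : 'I_n) : #|predC1 i| = n.-1.
Proof. by rewrite cardC1 card_ord. Qed.

Lemma nbuf_le_pred n (s : state n) (m : 'I_n) : ~~ isbuf (s m) -> (nbuf s <= n.-1)%N.
Proof.
move=> hm; rewrite -(card_predC1_ord m); apply: subset_leq_card.
by apply/fintype.subsetP => x; rewrite !inE; apply: contraTneq => ->.
Qed.

Lemma nbuf_ge_pred n (s : state n) (i : 'I_n) :
  (forall x, x != i -> isbuf (s x)) -> (n.-1 <= nbuf s)%N.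
Proof.
move=> hbuf; rewrite -(card_predC1_ord i); apply: subset_leq_card.
by apply/fintype.subsetP => x; rewrite !inE; apply: hbuf.
Qed.

Section Plans.
Variables (R : realType) (n : nat) (fp : 'I_n -> set (R * R)).
Variables (xs xg : 'I_n -> pose R) (allowed : 'I_n -> 'I_n -> bool).

Definition goals_block_starts : Prop :=
  forall i j k, k != i -> overlap (place (fp i) (xg j)) (place (fp k) (xs k)).

Lemma plan_needs_pred_buffers p k :
  (0 < n)%N -> goals_block_starts ->
  exec fp xs xg allowed (@init_state n) p k -> (n.-1 <= k)%N.
Proof.
move=> n0 hblock.
have : forall x j, @init_state n x <> AtGoal j by [].
elim: p (@init_state n) => [|a p IH] s no_goal /=.
  by case=> /(_ (Ordinal n0)) [j] /no_goal.
case=> hk [hv hex]; case: a hv hex => [i|i j] hv hex.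
  by apply: IH hex => x j /=; rewrite /upd; case: (x == i) => //; apply: no_goal.
apply: leq_trans hk; apply: (nbuf_ge_pred (i := i)) => x xi.
case: hv => _ [_ [_ [hstart _]]].
case e: (s x) => [| |j'] //; last by case: (no_goal x j').
by case: (hstart x xi e); apply: hblock.
Qed.

Section OwnGoals.
Hypothesis allowed_own : forall i, allowed i i.
Hypothesis goals_disjoint :
  forall i j, i != j -> ~ overlap (place (fp i) (xg i)) (place (fp j) (xg j)).

Lemma exec_place_own_goals (l : seq 'I_n) (s : state n) (m : 'I_n) :
  uniq l -> m \notin l ->
  (forall x, s x = if x \in l then InBuf _ else AtGoal x) ->
  exec fp xs xg allowed s [seq Place i i | i <- l] n.-1.
Proof.
elim: l s => [|i l IH] s /= ul ml hs.
  by split; [move=> x; exists x; rewrite hs | apply: (nbuf_le_pred (m := m)); rewrite hs].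
move: ul ml => /andP [il ul]; rewrite inE negb_or => /andP [mi ml].
split; first by apply: (nbuf_le_pred (m := m)); rewrite hs inE (negbTE ml) (negbTE mi).
split.
  split; first by right; rewrite hs inE eqxx.
  split; first exact: allowed_own.
  split; first by move=> k; rewrite hs; case: ifP => // hk [ek]; rewrite ek inE eqxx in hk.
  split; first by move=> k _; rewrite hs; case: ifP.
  move=> k j' ki; rewrite hs; case: ifP => // _ [<-].
  by apply: goals_disjoint; rewrite eq_sym.
apply: IH => // x; rewrite /upd hs inE.
by case: (eqVneq x i) => [->|] /=; first rewrite (negbTE il).
Qed.

Lemma exec_buffer_all (l : seq 'I_n) (s : state n) (m : 'I_n) rest :
  uniq l -> m \notin l -> ~~ isbuf (s m) -> (forall i, i \in l -> s i = AtStart _) ->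
  exec fp xs xg allowed (fun x => if x \in l then InBuf _ else s x) rest n.-1 ->
  exec fp xs xg allowed s ([seq ToBuf i | i <- l] ++ rest) n.-1.
Proof.
elim: l s => [|i l IH] s /= ul ml sm hl hex.
  by have -> : s = (fun x => if x \in [::] then InBuf n else s x) by apply: funext.
move: ul ml => /andP [il ul]; rewrite inE negb_or => /andP [mi ml].
split; first exact: nbuf_le_pred sm.
split; first by apply: hl; rewrite inE eqxx.
apply: IH => //.
- by rewrite /= /upd (negbTE mi).
- move=> x xl; rewrite /= /upd; case: (eqVneq x i) => [exi|_].
    by rewrite -exi xl in il.
  by apply: hl; rewrite inE xl orbT.
- move: hex; congr exec; apply: funext => x; rewrite /upd inE.
  by case: (eqVneq x i) => [->|] /=; first case: ifP.
Qed.

Lemma plan_with_pred_buffers :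
  (0 < n)%N -> exists p, exec fp xs xg allowed (@init_state n) p n.-1.
Proof.
move=> n0; set m := Ordinal n0; set others := [seq x <- enum 'I_n | x != m].
have uniq_others : uniq others by rewrite filter_uniq // enum_uniq.
have in_others x : (x \in others) = (x != m) by rewrite mem_filter mem_enum andbT.
have m_out : m \notin others by rewrite in_others eqxx.
exists ([seq ToBuf i | i <- others] ++ Place m m :: [seq Place i i | i <- others]).
apply: (exec_buffer_all (m := m)) => //.
split; first by apply: (nbuf_le_pred (m := m)); rewrite (negbTE m_out).
split.
  split; first by left; rewrite (negbTE m_out).
  split; first exact: allowed_own.
  split; first by move=> k; case: ifP.
  split; last by move=> k j' _; case: ifP.
  by move=> k km; rewrite in_others km.
apply: (exec_place_own_goals (m := m)) => // x.
by rewrite /= /upd in_others; case: (eqVneq x m) => [->|].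
Qed.

End OwnGoals.
End Plans.

Section MRB.
Variables (R : realType) (n : nat) (xs xg : 'I_n -> pose R).
Hypothesis n_gt0 : (0 < n)%N.

Section Labeled.
Variable fp : 'I_n -> set (R * R).
Hypothesis goals_disjoint :
  forall i j, i != j -> ~ overlap (place (fp i) (xg i)) (place (fp j) (xg j)).

Lemma labeled_MRB_le_pred : labeled_MRB_le fp xs xg n.-1.
Proof. by apply: plan_with_pred_buffers => // i; rewrite eqxx. Qed.

Lemma labeled_MRB_eq_pred :
  goals_block_starts fp xs xg -> labeled_MRB_eq fp xs xg n.-1.
Proof.
move=> hblock; split; first exact: labeled_MRB_le_pred.
by move=> k [p hp]; apply: plan_needs_pred_buffers hp.
Qed.

End Labeled.

Section Unlabeled.
Variable F : set (R * R).
Hypothesis goals_disjoint :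
  forall i j, i != j -> ~ overlap (place F (xg i)) (place F (xg j)).

Lemma unlabeled_MRB_le_pred : unlabeled_MRB_le F xs xg n.-1.
Proof. exact: plan_with_pred_buffers. Qed.

Lemma unlabeled_MRB_eq_pred :
  goals_block_starts (fun _ => F) xs xg -> unlabeled_MRB_eq F xs xg n.-1.
Proof.
move=> hblock; split; first exact: unlabeled_MRB_le_pred.
by move=> k [p hp]; apply: plan_needs_pred_buffers hp.
Qed.

End Unlabeled.
End MRB.

Section Boxes.
Variable R : realType.

Definition box (c1 c2 h1 h2 : R) : set (R * R) :=
  [set v | `|v.1 - c1| <= h1 /\ `|v.2 - c2| <= h2].

Lemma in_interior_box c1 c2 h1 h2 (p : R * R) :
  `|p.1 - c1| < h1 -> `|p.2 - c2| < h2 -> interior (box c1 c2 h1 h2) p.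
Proof.
move=> lt1 lt2; apply/nbhs_ballP.
exists (Num.min (h1 - `|p.1 - c1|) (h2 - `|p.2 - c2|)).
  by rewrite /= lt_min !subr_gt0 lt1 lt2.
move=> q []; rewrite -!ball_normE /= !lt_min => /andP [q1 _] /andP [_ q2].
have e1 : - `|p.1 - c1| <= p.1 - c1 <= `|p.1 - c1| by rewrite -ler_norml.
have e2 : - `|p.2 - c2| <= p.2 - c2 <= `|p.2 - c2| by rewrite -ler_norml.
move: e1 e2 lt1 lt2 q1 q2; generalize `|p.1 - c1| `|p.2 - c2| => A1 A2.
rewrite /box /= !ltr_norml !ler_norml.
move=> /andP [? ?] /andP [? ?] ? ? /andP [? ?] /andP [? ?].
by split; apply/andP; split; lra.
Qed.

Lemma place_rect_unrotated a b t1 t2 :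
  place (rect a b) (Pose 0 t1 t2) = box t1 t2 (a / 2) (b / 2).
Proof.
rewrite /place /act /= cos0 sin0; apply/seteqP; split => v.
  by case=> u [u1 u2] <-; rewrite /box /= !mul1r !mul0r subr0 add0r !addrK.
case=> v1 v2; exists (v.1 - t1, v.2 - t2) => //.
by rewrite !mul1r !mul0r subr0 add0r !subrK; case: v {v1 v2}.
Qed.

Lemma place_rect_quarter_turn a b t1 t2 :
  place (rect a b) (Pose (pi / 2) t1 t2) = box t1 t2 (b / 2) (a / 2).
Proof.
rewrite /place /act /= cos_pihalf sin_pihalf; apply/seteqP; split => v.
  case=> u [u1 u2] <-; rewrite /box /= !mul1r !mul0r add0r addr0 !addrK.
  by rewrite normrN.
case=> v1 v2; exists (v.2 - t2, t1 - v.1); first by split; rewrite //= distrC.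
by rewrite !mul1r !mul0r add0r addr0; case: v {v1 v2} => v1 v2 /=; congr (_, _); lra.
Qed.

Lemma disjoint_not_overlap (A B : set (R * R)) : A `&` B = set0 -> ~ overlap A B.
Proof.
move=> AB0 [x [/interior_subset Ax /interior_subset Bx]].
by have : (A `&` B) x by []; rewrite AB0.
Qed.

End Boxes.

Lemma natr_apart (R : realType) (i j : nat) : i != j ->
  (i%:R + 1 <= j%:R :> R) \/ (j%:R + 1 <= i%:R :> R).
Proof. by case: (ltngtP i j) => // h _; [left | right]; rewrite natr1 ler_nat. Qed.

Lemma ord_natr_bounds (R : realType) n (i : 'I_n) :
  0 <= (i : nat)%:R :> R /\ (i : nat)%:R + 1 <= n%:R :> R.
Proof. by rewrite natr1 ler_nat ltn_ord ler0n. Qed.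

Section Crossing.
Variables (R : realType) (n : nat).

Definition strip_len : R := 4 * n%:R.
Definition strip_ws : set (R * R) := box 0 0 strip_len strip_len.
Definition strip_start (i : 'I_n) : pose R := Pose 0 0 (2 * (i : nat)%:R).
Definition strip_goal (j : 'I_n) : pose R := Pose (pi / 2) (2 * (j : nat)%:R) 0.
Notation strip := (rect strip_len 1).

Lemma strip_len_gt0 : (0 < n)%N -> 0 < strip_len.
Proof. by move=> n0; rewrite mulr_gt0 // ltr0n. Qed.

Lemma strip_ws_bounded : bounded_ws strip_ws.
Proof. by exists strip_len => v [h1 h2]; rewrite -(subr0 v.1) -(subr0 v.2). Qed.

Lemma strip_starts_feasible : feasible strip_ws (fun _ => strip) strip_start.
Proof.
rewrite /strip_start; split=> [i v | i j ij] /=.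
  rewrite place_rect_unrotated; have [? ?] := ord_natr_bounds R i.
  rewrite /strip_ws /box /strip_len /= !ler_norml => -[/andP [? ?] /andP [? ?]].
  by split; apply/andP; split; lra.
apply: disjoint_not_overlap; rewrite !place_rect_unrotated; apply/seteqP; split => // v.
have := natr_apart R ij; rewrite /box /= !ler_norml.
by move=> + [[_ /andP [? ?]] [_ /andP [? ?]]]; case; lra.
Qed.

Lemma strip_goals_feasible (g : 'I_n -> 'I_n) : injective g ->
  feasible strip_ws (fun _ => strip) (fun i => strip_goal (g i)).
Proof.
move=> g_inj; rewrite /strip_goal; split=> [i v | i j ij] /=.
  rewrite place_rect_quarter_turn; have [? ?] := ord_natr_bounds R (g i).
  rewrite /strip_ws /box /strip_len /= !ler_norml => -[/andP [? ?] /andP [? ?]].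
  by split; apply/andP; split; lra.
apply: disjoint_not_overlap; rewrite !place_rect_quarter_turn; apply/seteqP; split => // v.
have /natr_apart : g i != g j by rewrite (inj_eq g_inj).
move=> /(_ R); rewrite /box /= !ler_norml.
by move=> + [[/andP [? ?] _] [/andP [? ?] _]]; case; lra.
Qed.

Lemma strip_instance (g : 'I_n -> 'I_n) : injective g ->
  labeled_instance strip_ws (fun _ => strip) strip_start (fun i => strip_goal (g i)).
Proof.
move=> g_inj; split; first exact: strip_ws_bounded.
by split; [exact: strip_starts_feasible | exact: strip_goals_feasible].
Qed.

Lemma strip_unlabeled_instance :
  unlabeled_instance strip_ws strip strip_start strip_goal.
Proof. exact: (strip_instance (@inj_id 'I_n)). Qed.

Lemma strip_goals_block_starts (g : 'I_n -> 'I_n) :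
  goals_block_starts (fun _ => strip) strip_start (fun i => strip_goal (g i)).
Proof.
move=> i j k _; exists (2 * (g j : nat)%:R, 2 * (k : nat)%:R).
have [? ?] := ord_natr_bounds R (g j); have [? ?] := ord_natr_bounds R k.
rewrite /strip_start /strip_goal place_rect_unrotated place_rect_quarter_turn.
by split; apply: in_interior_box; rewrite /strip_len /= ?subrr ?subr0 ?normr0 ?ger0_norm; lra.
Qed.

Lemma strip_labeled_MRB_eq (g : 'I_n -> 'I_n) : (0 < n)%N -> injective g ->
  labeled_MRB_eq (fun _ => strip) strip_start (fun i => strip_goal (g i)) n.-1.
Proof.
move=> n0 g_inj; apply: (labeled_MRB_eq_pred n0).
  exact: (strip_goals_feasible g_inj).2.
exact: strip_goals_block_starts.
Qed.

Lemma strip_unlabeled_MRB_eq : (0 < n)%N ->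
  unlabeled_MRB_eq strip strip_start strip_goal n.-1.
Proof.
move=> n0; apply: (unlabeled_MRB_eq_pred n0).
  exact: (strip_goals_feasible (@inj_id 'I_n)).2.
exact: (strip_goals_block_starts id).
Qed.

End Crossing.

Theorem proposition4 (R : realType) :
  (forall (n : nat) (W : set (R * R)) (fp : 'I_n -> set (R * R))
          (xs xg : 'I_n -> pose R),
     (0 < n)%N -> labeled_instance W fp xs xg ->
     labeled_MRB_le fp xs xg n.-1) /\
  (forall (n : nat) (W : set (R * R)) (F : set (R * R))
          (xs xg : 'I_n -> pose R),
     (0 < n)%N -> unlabeled_instance W F xs xg ->
     unlabeled_MRB_le F xs xg n.-1) /\
  (forall n : nat, (0 < n)%N ->
     exists (W : set (R * R)) (a b : R) (xs xg : 'I_n -> pose R),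
       0 < a /\ 0 < b /\
       unlabeled_instance W (rect a b) xs xg /\
       unlabeled_MRB_eq (rect a b) xs xg n.-1 /\
       forall sigma : {perm 'I_n},
         labeled_instance W (fun _ => rect a b) xs (fun i => xg (sigma i)) /\
         labeled_MRB_eq (fun _ => rect a b) xs (fun i => xg (sigma i)) n.-1).
Proof.
split; first by move=> n W fp xs xg n0 [_ [_ [_ hg]]]; apply: labeled_MRB_le_pred.
split; first by move=> n W F xs xg n0 [_ [_ [_ hg]]]; apply: unlabeled_MRB_le_pred.
move=> n n0; exists (@strip_ws R n), (@strip_len R n), 1, (@strip_start R n), (@strip_goal R n).
split; first exact: strip_len_gt0.
split=> //; split; first exact: strip_unlabeled_instance.
split; first exact: strip_unlabeled_MRB_eq.
move=> sigma; have sigma_inj := @perm_inj _ sigma.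
by split; [exact: strip_instance | exact: strip_labeled_MRB_eq].
Qed.
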